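(* Let $\mathbb{F}$ be a field of characteristic zero, $n\ge1$, $a\in(\mathbb{F}^* )^n$ and $B\in\mathbb{F}^{n\times n}$ symmetric. Suppose that $G=G(a,B)$ is twin-free and $\sum_{i=1}^n a_i\neq0$. Then $h(F_1,G)\,h(F_2,G)=h(F_1\cdot F_2,G)$ for all $F_1,F_2\in\mathcal{G}_1$ if and only if $\Gamma(a,B)$ acts transitively on $[n]$.
   Context: Graphs are finite multigraphs, possibly with loops and multiple edges. $G(a,B)$ is the weighted graph on vertex set $[n]$ with vertex weights $a_i$ and edge weights $B_{i,j}$; it is twin-free if no two rows of $B$ are equal. For a graph $F$, $\hom(F,G)=\sum_{\phi:V(F)\to[n]}\prod_{v\in V(F)}a_{\phi(v)}\prod_{uv\in E(F)}B_{\phi(u),\phi(v)}$ (edges with multiplicity) and $h(F,G)=\hom(F,G)/\big(\sum_{i=1}^n a_i\big)^{c(F)}$, where $c(F)$ is the number of connected components of $F$. $\mathcal{G}_1$ is the set of graphs with one labelled vertex; for $F_1,F_2\in\mathcal{G}_1$, $F_1\cdot F_2$ is obtained from their disjoint union by identifying the two labelled vertices; labels are forgotten when evaluating $h$. $\Gamma(a,B)$ is the group of permutations $\gamma$ of $[n]$ with $a_{\gamma(i)}=a_i$ and $B_{\gamma(i),\gamma(j)}=B_{i,j}$ for all $i,j$. *)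

From HB Require Import structures.
From mathcomp Require Import all_boot all_order all_algebra all_fingroup.
Set Implicit Arguments. Unset Strict Implicit. Unset Printing Implicit Defensive.
Import Order.TTheory GRing.Theory.
Local Open Scope ring_scope.

(* A finite multigraph (loops and multiple edges allowed) with one labelled
   vertex: vertices 'I_nv, edges a list (with multiplicity) of vertex pairs. *)
Record graph1 := Graph1 {
  nv : nat;
  lab : 'I_nv;
  edges : seq ('I_nv * 'I_nv)
}.

Definition adj (F : graph1) : rel 'I_(nv F) :=
  fun u v => ((u, v) \in edges F) || ((v, u) \in edges F).

Definition ncomp (F : graph1) : nat := n_comp (@adj F) predT.

(* F1 . F2 : disjoint union with the two labelled vertices identified *)
Definition glue_nv (F1 F2 : graph1) : nat := nv F1 + (nv F2).-1.

Definition emb1 (F1 F2 : graph1) (v : 'I_(nv F1)) : 'I_(glue_nv F1 F2) :=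
  widen_ord (leq_addr _ _) v.

Definition emb2 (F1 F2 : graph1) (w : 'I_(nv F2)) : 'I_(glue_nv F1 F2) :=
  if w == lab F2 then emb1 F2 (lab F1)
  else insubd (emb1 F2 (lab F1))
              (nv F1 + (if (w < lab F2)%N then val w else (val w).-1)).

Definition glue (F1 F2 : graph1) : graph1 :=
  @Graph1 (glue_nv F1 F2) (emb1 F2 (lab F1))
    ([seq (emb1 F2 p.1, emb1 F2 p.2) | p <- edges F1] ++
     [seq (emb2 F1 p.1, emb2 F1 p.2) | p <- edges F2]).

Definition hom (K : fieldType) (n : nat) (a : 'I_n -> K) (B : 'M[K]_n)
  (F : graph1) : K :=
  \sum_(phi : {ffun 'I_(nv F) -> 'I_n})
     ((\prod_(v : 'I_(nv F)) a (phi v)) *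
      \prod_(e <- edges F) B (phi e.1) (phi e.2)).

Definition hdens (K : fieldType) (n : nat) (a : 'I_n -> K) (B : 'M[K]_n)
  (F : graph1) : K :=
  hom a B F / (\sum_i a i) ^+ ncomp F.

Definition twin_free (K : fieldType) (n : nat) (B : 'M[K]_n) : Prop :=
  forall i j : 'I_n, row i B = row j B -> i = j.

Definition autG (K : fieldType) (n : nat) (a : 'I_n -> K) (B : 'M[K]_n)
  : {set {perm 'I_n}} :=
  [set g : {perm 'I_n} | [forall i, a (g i) == a i] &&
                         [forall i, forall j, B (g i) (g j) == B i j]].

Definition transitive_on_all (n : nat) (S : {set {perm 'I_n}}) : Prop :=
  forall i j : 'I_n, exists2 g, g \in S & g i = j.

(* Write hom(F) = \sum_i a_i t_F(i), where t_F(i) is the weighted count of the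
   homomorphisms sending the label of F to i, divided by a_i.  Then t_(F1.F2) = t_F1 t_F2, and as
   F1.F2 has one component fewer than the disjoint union of F1 and F2, the
   multiplicativity of h says that S <f, g> = <f, 1> <g, 1>, where <f, g> is
   \sum_i a_i f_i g_i and S = \sum_i a_i, for all f, g in the algebra spanned by
   the t_F.  This algebra contains the indicator of each class of vertices that no
   t_F separates.  Two vertices i, j of a class are exchanged by an automorphism:
   the indicator of the maps psi : [n] -> [n] that no n-labelled graph tells
   apart from the identity is a combination of such graphs, so rooting it at i
   and at j gives proportional counts of these psi with psi(i) = i, resp. j; the
   first is nonzero (char 0), and by twin-freeness the psi are automorphisms
   (edges force them to preserve B, stars to preserve a).  Hence a is constant on
   a class, the identity for f = g = its indicator gives it mass S, and two
   distinct classes would force S^2 = 0.  Conversely, a transitive automorphism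
   group makes a and all t_F constant, and the identity is immediate. *)

From Pilot Require Import Defs.
From HB Require Import structures.
From mathcomp Require Import all_boot all_order all_algebra all_fingroup.
From mathcomp Require Import ring.
From Stdlib Require Import Classical.
Import GRing.Theory.
Local Open Scope ring_scope.

Set Implicit Arguments. Unset Strict Implicit. Unset Printing Implicit Defensive.

Section FfunSplit.
Variable I : finType.

Definition ffun_cat p q (f : {ffun 'I_p -> I}) (g : {ffun 'I_q -> I})
  : {ffun 'I_(p + q) -> I} :=
  [ffun v => match split v with inl x => f x | inr y => g y end].

Lemma ffun_cat_lshift p q (f : {ffun 'I_p -> I}) (g : {ffun 'I_q -> I}) x :
  ffun_cat f g (lshift q x) = f x.
Proof. by rewrite ffunE (unsplitK (inl _ x)). Qed.

Lemma ffun_cat_rshift p q (f : {ffun 'I_p -> I}) (g : {ffun 'I_q -> I}) y :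
  ffun_cat f g (rshift p y) = g y.
Proof. by rewrite ffunE (unsplitK (inr _ y)). Qed.

Lemma sum_ffun_cat (R : nmodType) p q (F : {ffun 'I_(p + q) -> I} -> R) :
  \sum_h F h = \sum_(f : {ffun 'I_p -> I}) \sum_(g : {ffun 'I_q -> I}) F (ffun_cat f g).
Proof.
rewrite pair_big /= (reindex (fun fg => ffun_cat fg.1 fg.2)) //.
exists (fun h : {ffun 'I_(p + q) -> I} =>
  ([ffun x => h (lshift q x)] : {ffun 'I_p -> I}, [ffun y => h (rshift p y)] : {ffun 'I_q -> I})).
  move=> [f g] _ /=; congr pair; apply/ffunP => x;
  by rewrite ffunE ?ffun_cat_lshift ?ffun_cat_rshift.
move=> h _; apply/ffunP => v; rewrite ffunE.
by case: splitP => [x|y] /= E; rewrite ffunE; congr (h _); apply/val_inj.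
Qed.

Definition ffun_ins N (l : 'I_N) (i : I) (g : {ffun 'I_N.-1 -> I}) : {ffun 'I_N -> I} :=
  [ffun w => if unlift l w is Some j then g j else i].

Lemma ffun_ins_at N (l : 'I_N) i g : ffun_ins l i g l = i.
Proof. by rewrite ffunE unlift_none. Qed.

Lemma ffun_ins_lift N (l : 'I_N) i g j : ffun_ins l i g (lift l j) = g j.
Proof. by rewrite ffunE liftK. Qed.

Lemma sum_ffun_ins (R : nmodType) N (l : 'I_N) (F : {ffun 'I_N -> I} -> R) :
  \sum_h F h = \sum_(i : I) \sum_(g : {ffun 'I_N.-1 -> I}) F (ffun_ins l i g).
Proof.
rewrite pair_big /= (reindex (fun ig => ffun_ins l ig.1 ig.2)) //.
exists (fun h : {ffun 'I_N -> I} => (h l, [ffun j => h (lift l j)] : {ffun 'I_N.-1 -> I})).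
  move=> [i g] _ /=; rewrite ffun_ins_at; congr pair; apply/ffunP => j.
  by rewrite ffunE ffun_ins_lift.
move=> h _; apply/ffunP => w; rewrite ffunE.
by case: unliftP => [j ->|->]; rewrite ?ffunE.
Qed.

Lemma sum_ffun_ins_at (R : nmodType) N (l : 'I_N) (i : I) (F : {ffun 'I_N -> I} -> R) :
  \sum_(h : {ffun 'I_N -> I} | h l == i) F h = \sum_(g : {ffun 'I_N.-1 -> I}) F (ffun_ins l i g).
Proof.
rewrite big_mkcond (sum_ffun_ins l) (bigD1 i) //= [X in _ + X]big1 ?addr0.
  by apply: eq_bigr => g _; rewrite ffun_ins_at eqxx.
by move=> k /negbTE kn; apply: big1 => g _; rewrite ffun_ins_at kn.
Qed.

Lemma sum_ffun0 (R : nmodType) (x : R) : \sum_(g : {ffun 'I_0 -> I}) x = x.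
Proof. by rewrite sumr_const card_ffun card_ord expn0 mulr1n. Qed.

End FfunSplit.

Section Span.
Variables (X : finType) (R : comPzRingType) (Idx : Type) (g : Idx -> X -> R).

Definition spanned (f : X -> R) :=
  exists s : seq (R * Idx), forall x, f x = \sum_(p <- s) p.1 * g p.2 x.

Lemma spanned_gen i : spanned (g i).
Proof. by exists [:: (1, i)] => x; rewrite big_seq1 mul1r. Qed.

Lemma spanned_eq f1 f2 : f1 =1 f2 -> spanned f1 -> spanned f2.
Proof. by move=> E [s Hs]; exists s => x; rewrite -E. Qed.

Lemma spannedD f1 f2 : spanned f1 -> spanned f2 -> spanned (fun x => f1 x + f2 x).
Proof. by move=> [s1 H1] [s2 H2]; exists (s1 ++ s2) => x; rewrite big_cat H1 H2. Qed.

Lemma spannedZ c f : spanned f -> spanned (fun x => c * f x).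
Proof.
move=> [s Hs]; exists [seq (c * p.1, p.2) | p <- s] => x.
by rewrite big_map Hs mulr_sumr; apply: eq_bigr => p _; rewrite mulrA.
Qed.

Lemma spanned_orth (w : X -> R) f :
  (forall i, \sum_x w x * g i x = 0) -> spanned f -> \sum_x w x * f x = 0.
Proof.
move=> wg [s Hs]; under eq_bigr do rewrite Hs mulr_sumr.
rewrite exchange_big big1 // => p _.
by under eq_bigr do rewrite mulrCA; rewrite -mulr_sumr wg mulr0.
Qed.

Variable gm : Idx -> Idx -> Idx.
Hypothesis gM : forall i j x, g (gm i j) x = g i x * g j x.
Variable u : Idx.
Hypothesis gu : forall x, g u x = 1.

Lemma spannedM f1 f2 : spanned f1 -> spanned f2 -> spanned (fun x => f1 x * f2 x).
Proof.
move=> [s1 H1] [s2 H2].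
exists [seq (p.1 * q.1, gm p.2 q.2) | p <- s1, q <- s2] => x.
rewrite H1 H2 big_distrl /= big_allpairs_dep; apply: eq_bigr => p _.
by rewrite mulr_sumr; apply: eq_bigr => q _ /=; rewrite gM mulrACA.
Qed.

Lemma spanned_const c : spanned (fun _ => c).
Proof.
apply: (@spanned_eq (fun x => c * g u x)); first by move=> x; rewrite gu mulr1.
exact/spannedZ/spanned_gen.
Qed.

End Span.

Lemma spanned_indicator (X : finType) (K : fieldType) (Idx : Type) (g : Idx -> X -> K)
    (gm : Idx -> Idx -> Idx) (u : Idx) :
  (forall i j x, g (gm i j) x = g i x * g j x) -> (forall x, g u x = 1) ->
  forall x0, exists f, [/\ spanned g f,
     forall y, (forall i, g i y = g i x0) -> f y = 1 &
     forall y, ~ (forall i, g i y = g i x0) -> f y = 0].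
Proof.
move=> gM gu x0.
suff [f [fg f1 f0]] : exists f, [/\ spanned g f,
     forall y, (forall i, g i y = g i x0) -> f y = 1 &
     forall y, y \in enum X -> ~ (forall i, g i y = g i x0) -> f y = 0].
  by exists f; split => // y; apply: f0; rewrite mem_enum.
elim: (enum X) => [|y L [f [fg f1 f0]]].
  by exists (fun _ => 1); split => //; apply: spanned_const gu _.
have [cy|/not_all_ex_not [i ne]] := classic (forall i, g i y = g i x0).
  by exists f; split => // z; rewrite inE => /orP [/eqP -> //|]; exact: f0.
(* Multiplying by an affine function of [g i], which separates [y] from [x0], kills [y]. *)
have d_neq0 : g i x0 - g i y != 0 by rewrite subr_eq0; apply/eqP => E; apply: ne.
exists (fun z => f z * ((g i z - g i y) / (g i x0 - g i y))); split.
- apply: spannedM gM _ _ fg _.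
  apply: (spanned_eq (f1 := fun z => (g i x0 - g i y)^-1 * g i z +
                                  - ((g i x0 - g i y)^-1 * g i y))).
    by move=> z; rewrite -mulrN -mulrDr mulrC.
  exact/spannedD/(spanned_const gu)/spannedZ/spanned_gen.
- by move=> z gz; rewrite f1 // gz divff // mul1r.
- move=> z; rewrite inE => /orP [/eqP ->|zL] nz; first by rewrite subrr mul0r mulr0.
  by rewrite f0 // mul0r.
Qed.

Lemma separating_orth0 (X : finType) (K : fieldType) (Idx : Type) (g : Idx -> X -> K)
    (gm : Idx -> Idx -> Idx) (u : Idx) (w : X -> K) :
  (forall i j x, g (gm i j) x = g i x * g j x) -> (forall x, g u x = 1) ->
  (forall x y, (forall i, g i y = g i x) -> y = x) ->
  (forall i, \sum_x w x * g i x = 0) -> forall x, w x = 0.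
Proof.
move=> gM gu g_sep wg x0.
have [f [fg f1 f0]] := spanned_indicator gM gu x0.
have := spanned_orth wg fg; rewrite (bigD1 x0) //= f1 // mulr1 big1 ?addr0 // => y yx0.
by rewrite f0 ?mulr0 // => /g_sep/eqP; rewrite (negbTE yx0).
Qed.

Lemma connect_invariant (T : finType) (e : rel T) (U : Type) (k : T -> U) :
  (forall x y, e x y -> k x = k y) -> forall x y, connect e x y -> k x = k y.
Proof.
move=> ke x _ /connectP [p Hp ->].
by elim: p x Hp => //= z p IH x /andP [/ke -> /IH].
Qed.

Lemma connect_homo (T T' : finType) (e : rel T) (e' : rel T') (h : T -> T') :
  (forall x y, e x y -> e' (h x) (h y)) ->
  forall x y, connect e x y -> connect e' (h x) (h y).
Proof.
move=> he x _ /connectP [p Hp ->].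
elim: p x Hp => //= z p IH x /andP [/he/connect1 exz /IH]; exact: connect_trans.
Qed.

Lemma n_comp_image (T U : finType) (e : rel T) (k : T -> U) :
  connect_sym e -> (forall x y, connect e x y <-> k x = k y) ->
  n_comp e predT = #|[set k x | x in T]|.
Proof.
move=> sym_e ek.
have -> : n_comp e predT = #|[set x | roots e x]|.
  by apply: eq_card => x; rewrite !inE andbT.
have -> : [set k x | x in T] = [set k x | x in [set x | roots e x]].
  apply/setP => u; apply/imsetP/imsetP => [[x _ ->]|[x _ ->]]; last by exists x.
  by exists (fingraph.root e x); rewrite ?inE ?roots_root //; apply/ek/connect_root.
rewrite card_in_imset // => x y; rewrite !inE => /eqP rx /eqP ry /ek cxy.
by rewrite -rx -ry; exact/(fingraph.rootP sym_e).
Qed.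

Lemma emb1E (F1 F2 : graph1) x : emb1 F2 x = lshift (nv F2).-1 x :> 'I_(nv F1 + _).
Proof. exact/val_inj. Qed.

Lemma emb2_lab (F1 F2 : graph1) : emb2 F1 (lab F2) = emb1 F2 (lab F1).
Proof. by rewrite /emb2 eqxx. Qed.

Lemma emb2_lift (F1 F2 : graph1) j :
  emb2 F1 (lift (lab F2) j) = rshift (nv F1) j :> 'I_(nv F1 + (nv F2).-1).
Proof.
rewrite /emb2 eq_sym (negbTE (neq_lift _ _)); apply/val_inj.
rewrite val_insubd /= /bump.
have -> : (if ((lab F2 <= j) + j < lab F2)%N then ((lab F2 <= j) + j)%N
           else ((lab F2 <= j) + j).-1) = j.
  by case: (leqP (lab F2) j) => h /=; [rewrite add1n ltnNge (leqW h) | rewrite add0n h].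
by rewrite ltn_add2l ltn_ord.
Qed.

Lemma ffun_cat_emb1 (I : finType) (F1 F2 : graph1) (f : {ffun 'I_(nv F1) -> I})
    (g : {ffun 'I_(nv F2).-1 -> I}) x :
  ffun_cat f g (emb1 F2 x) = f x.
Proof. by rewrite emb1E ffun_cat_lshift. Qed.

Lemma ffun_cat_emb2 (I : finType) (F1 F2 : graph1) (f : {ffun 'I_(nv F1) -> I})
    (g : {ffun 'I_(nv F2).-1 -> I}) w :
  ffun_cat f g (emb2 F1 w) = ffun_ins (lab F2) (f (lab F1)) g w.
Proof.
case: (unliftP (lab F2) w) => [j ->|->].
  by rewrite emb2_lift ffun_cat_rshift ffun_ins_lift.
by rewrite emb2_lab ffun_cat_emb1 ffun_ins_at.
Qed.

Lemma adj_sym (F : graph1) : symmetric (@adj F).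
Proof. by move=> u v; rewrite /adj orbC. Qed.

Lemma adj_connect_sym (F : graph1) : connect_sym (@adj F).
Proof. exact/sym_connect_sym/adj_sym. Qed.

Lemma ncomp_root (F : graph1) :
  ncomp F = #|[set fingraph.root (@adj F) x | x in 'I_(nv F)]|.
Proof.
rewrite /ncomp (n_comp_image (k := fingraph.root (@adj F)) (@adj_connect_sym F)) // => x y.
by split => /(fingraph.rootP (@adj_connect_sym F)).
Qed.

Section GlueComponents.
Variables F1 F2 : graph1.

Local Notation G := (glue F1 F2).
Local Notation root1 := (fingraph.root (@adj F1)).
Local Notation root2 := (fingraph.root (@adj F2)).

(* Components of [F1 . F2] are labelled by components of [F1], the component
   of the label of [F2] being merged into that of the label of [F1]. *)
Definition glue_comp (v : 'I_(nv G)) : 'I_(nv F1) + 'I_(nv F2) :=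
  match split (v : 'I_(nv F1 + (nv F2).-1)) with
  | inl x => inl (root1 x)
  | inr j => if connect (@adj F2) (lift (lab F2) j) (lab F2) then inl (root1 (lab F1))
             else inr (root2 (lift (lab F2) j))
  end.

Lemma glue_comp_emb1 x : glue_comp (emb1 F2 x) = inl (root1 x).
Proof. by rewrite /glue_comp emb1E (unsplitK (inl _ x)). Qed.

Lemma glue_comp_emb2 w : glue_comp (emb2 F1 w) =
  if connect (@adj F2) w (lab F2) then inl (root1 (lab F1)) else inr (root2 w).
Proof.
case: (unliftP (lab F2) w) => [j ->|->].
  by rewrite /glue_comp emb2_lift (unsplitK (inr _ j)).
by rewrite emb2_lab glue_comp_emb1 connect0.
Qed.

Variant glue_vertex_spec : 'I_(nv G) -> Type :=
  | GlueVertex1 x : glue_vertex_spec (emb1 F2 x)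
  | GlueVertex2 w : glue_vertex_spec (emb2 F1 w).

Lemma glue_vertexP v : glue_vertex_spec v.
Proof.
case: (splitP (v : 'I_(nv F1 + (nv F2).-1))) => [x|j] E.
  suff -> : v = emb1 F2 x by constructor.
  exact/val_inj.
suff -> : v = emb2 F1 (lift (lab F2) j) by constructor.
by rewrite emb2_lift; apply/val_inj.
Qed.

Lemma adj_glue1 x y : adj x y -> adj (F := G) (emb1 F2 x) (emb1 F2 y).
Proof.
rewrite /adj /= !mem_cat => /orP [] H; apply/orP; [left|right]; apply/orP; left;
  apply/mapP; [exists (x, y)|exists (y, x)] => //.
Qed.

Lemma adj_glue2 x y : adj x y -> adj (F := G) (emb2 F1 x) (emb2 F1 y).
Proof.
rewrite /adj /= !mem_cat => /orP [] H; apply/orP; [left|right]; apply/orP; right;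
  apply/mapP; [exists (x, y)|exists (y, x)] => //.
Qed.

Lemma glue_comp_edge u v : (u, v) \in edges G -> glue_comp u = glue_comp v.
Proof.
rewrite /= mem_cat => /orP [] /mapP [[x y] xy [-> ->]] /=.
  rewrite !glue_comp_emb1; congr inl; apply/(fingraph.rootP (@adj_connect_sym F1)).
  by apply: connect1; rewrite /adj xy.
have cxy : connect (@adj F2) x y by apply: connect1; rewrite /adj xy.
rewrite !glue_comp_emb2 (same_connect (@adj_connect_sym F2) cxy).
by rewrite (elimT (fingraph.rootP (@adj_connect_sym F2)) cxy).
Qed.

Lemma connect_glue_comp u v :
  connect (@adj G) u v -> glue_comp u = glue_comp v.
Proof.
apply: connect_invariant => x y /orP [] /glue_comp_edge //; exact: esym.
Qed.

Lemma glue_comp_connect u v :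
  glue_comp u = glue_comp v -> connect (@adj G) u v.
Proof.
have C1 := connect_homo adj_glue1; have C2 := connect_homo adj_glue2.
have S1 := @adj_connect_sym F1; have S2 := @adj_connect_sym F2.
have SG := @adj_connect_sym G.
have C12 x w : root1 x = root1 (lab F1) -> connect (@adj F2) w (lab F2) ->
    connect (@adj G) (emb1 F2 x) (emb2 F1 w).
  move=> /(fingraph.rootP S1)/C1 x_lab /C2 w_lab.
  by apply: connect_trans x_lab _; rewrite SG -emb2_lab.
case: (glue_vertexP u) => [x|w]; case: (glue_vertexP v) => [y|w'];
  rewrite ?glue_comp_emb1 ?glue_comp_emb2.
- by case=> /(fingraph.rootP S1)/C1.
- by case: ifP => // c [r]; apply: C12.
- by case: ifP => // c [/esym r]; rewrite SG; apply: C12.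
case: ifP => c; case: ifP => c' // E; apply: C2.
  by apply: connect_trans c _; rewrite S2.
by case: E => /(fingraph.rootP S2).
Qed.

Lemma glue_comp_image :
  [set glue_comp v | v in 'I_(nv G)] =
  inl @: [set root1 x | x in 'I_(nv F1)] :|:
  inr @: ([set root2 w | w in 'I_(nv F2)] :\ root2 (lab F2)).
Proof.
have S2 := @adj_connect_sym F2.
apply/setP => s; apply/imsetP/setUP => [[v _ ->]|].
  case: (glue_vertexP v) => [x|w]; rewrite ?glue_comp_emb1 ?glue_comp_emb2.
    by left; apply/imsetP; exists (root1 x) => //; apply/imsetP; exists x.
  case: ifP => c.
    by left; apply/imsetP; exists (root1 (lab F1)) => //; apply/imsetP; exists (lab F1).
  right; apply/imsetP; exists (root2 w) => //.
  rewrite !inE; apply/andP; split; last by apply/imsetP; exists w.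
  by apply/negP => /eqP /(fingraph.rootP S2); rewrite c.
case=> /imsetP [y Hy ->].
  by case/imsetP: Hy => x _ ->; exists (emb1 F2 x); rewrite ?glue_comp_emb1.
move: Hy; rewrite !inE => /andP [ne /imsetP [w _ Ew]].
exists (emb2 F1 w) => //; rewrite glue_comp_emb2 Ew; case: ifP => // c.
by move: ne; rewrite Ew; move/(fingraph.rootP S2): c => ->; rewrite eqxx.
Qed.

Lemma ncomp_glue : (ncomp G + 1 = ncomp F1 + ncomp F2)%N.
Proof.
rewrite [ncomp G](n_comp_image (k := glue_comp) (@adj_connect_sym G)); last first.
  by move=> u v; split; [apply: connect_glue_comp | apply: glue_comp_connect].
rewrite !ncomp_root glue_comp_image cardsU.
have -> : inl @: [set root1 x | x in 'I_(nv F1)] :&: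
          inr @: ([set root2 w | w in 'I_(nv F2)] :\ root2 (lab F2)) = set0.
  by apply/setP => s; rewrite !inE; apply/negP => /andP [/imsetP [x _ ->] /imsetP [y _]].
have inl_inj : injective (@inl 'I_(nv F1) 'I_(nv F2)) by move=> x y [].
have inr_inj : injective (@inr 'I_(nv F1) 'I_(nv F2)) by move=> x y [].
rewrite cards0 subn0 (card_imset _ inl_inj) (card_imset _ inr_inj).
rewrite [X in (_ = _ + X)%N](cardsD1 (root2 (lab F2))) imset_f //.
by rewrite -addnA addn1.
Qed.

End GlueComponents.

Definition K1 : graph1 := @Graph1 1 ord0 [::].

Section RootedHom.
Variables (K : fieldType) (n : nat) (a : 'I_n -> K) (B : 'M[K]_n).
Local Notation hom := (Defs.hom a B).

Definition hweight (F : graph1) (phi : {ffun 'I_(nv F) -> 'I_n}) : K :=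
  (\prod_v a (phi v)) * \prod_(e <- edges F) B (phi e.1) (phi e.2).

Definition rhom (F : graph1) (i : 'I_n) : K :=
  \sum_(phi : {ffun 'I_(nv F) -> 'I_n} | phi (lab F) == i) hweight phi.

Lemma hom_rhom F : hom F = \sum_i rhom F i.
Proof.
rewrite (exchange_big_dep xpredT) //=; apply: eq_bigr => phi _.
by rewrite (big_pred1 (phi (lab F))) // => i; rewrite eq_sym.
Qed.

Lemma hweight_glue (F1 F2 : graph1) (f : {ffun 'I_(nv F1) -> 'I_n})
    (g : {ffun 'I_(nv F2).-1 -> 'I_n}) :
  a (f (lab F1)) * hweight (ffun_cat f g : {ffun 'I_(nv (glue F1 F2)) -> 'I_n})
  = hweight f * hweight (ffun_ins (lab F2) (f (lab F1)) g).
Proof.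
rewrite /hweight /= big_split_ord big_cat !big_map /= (bigD1_ord (lab F2)) //=.
under eq_bigr do rewrite ffun_cat_lshift.
under [\prod_(i < (nv F2).-1) _]eq_bigr do rewrite ffun_cat_rshift.
under [\prod_(j <- edges F1) _]eq_bigr do rewrite !ffun_cat_emb1.
under [\prod_(j <- edges F2) _]eq_bigr do rewrite !ffun_cat_emb2.
under [X in _ = _ * (_ * X * _)]eq_bigr do rewrite ffun_ins_lift.
rewrite ffun_ins_at; ring.
Qed.

Lemma rhom_glue (F1 F2 : graph1) i :
  a i * rhom (glue F1 F2) i = rhom F1 i * rhom F2 i.
Proof.
rewrite /rhom big_mkcond (sum_ffun_cat (p := nv F1) (q := (nv F2).-1)).
rewrite (sum_ffun_ins_at (lab F2)) big_distrl mulr_sumr [RHS]big_mkcond /=.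
apply: eq_bigr => f _; rewrite mulr_sumr.
case: eqP => [<-|ne]; last first.
  by apply: big1 => g _; rewrite ffun_cat_emb1; case: eqP => // _; rewrite mulr0.
rewrite mulr_sumr; apply: eq_bigr => g _.
by rewrite ffun_cat_emb1 eqxx hweight_glue.
Qed.

Lemma hdens_glueE F1 F2 : \sum_i a i != 0 ->
  hdens a B F1 * hdens a B F2 = hdens a B (glue F1 F2) <->
  hom F1 * hom F2 = (\sum_i a i) * hom (glue F1 F2).
Proof.
set S := \sum_i a i => S_neq0; rewrite /hdens.
have Sc_neq0 : S ^+ (ncomp (glue F1 F2)).+1 != 0 by rewrite expf_neq0.
have -> : hom F1 / S ^+ ncomp F1 * (hom F2 / S ^+ ncomp F2) =
    hom F1 * hom F2 / S ^+ (ncomp (glue F1 F2)).+1.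
  by rewrite -addn1 ncomp_glue exprD mulrACA -invfM.
have -> : hom (glue F1 F2) / S ^+ ncomp (glue F1 F2) =
    S * hom (glue F1 F2) / S ^+ (ncomp (glue F1 F2)).+1.
  by rewrite exprS invfM [S * _]mulrC mulrA mulfK.
by split => [/(divIf Sc_neq0)|->].
Qed.

Hypothesis a_neq0 : forall i, a i != 0.

Definition nrhom F i := rhom F i / a i.

Lemma hom_nrhom F : hom F = \sum_i a i * nrhom F i.
Proof. by rewrite hom_rhom; apply: eq_bigr => i _; rewrite mulrC divfK. Qed.

Lemma nrhom_glue F1 F2 i : nrhom (glue F1 F2) i = nrhom F1 i * nrhom F2 i.
Proof.
rewrite /nrhom mulrACA -invfM -rhom_glue.
by rewrite invfM mulrA [a i * _]mulrC mulfK.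
Qed.

Lemma nrhom_K1 i : nrhom K1 i = 1.
Proof.
rewrite /nrhom /rhom (sum_ffun_ins_at (ord0 : 'I_(nv K1))) /hweight /=.
under eq_bigr do rewrite big_ord1 big_nil mulr1 ffun_ins_at.
by rewrite sum_ffun0 divff.
Qed.

End RootedHom.

(* A graph whose vertices [0, n) are labelled, followed by [lnv] unlabelled ones. *)
Record lgraph (n : nat) := LGraph { lnv : nat; ledges : seq ('I_(n + lnv) * 'I_(n + lnv)) }.

Definition lgraph_unit n : lgraph n := @LGraph n 0 [::].

Definition lgraph_edge n (k l : 'I_n) : lgraph n :=
  @LGraph n 0 [:: (lshift 0 k, lshift 0 l)].

Definition lgraph_star n (s : seq 'I_n) : lgraph n :=
  @LGraph n 1 [seq (lshift 1 k, rshift n ord0) | k <- s].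

Definition lmul_embl n m1 m2 (v : 'I_(n + m1)) : 'I_(n + (m1 + m2)) :=
  match split v with inl k => lshift _ k | inr x => rshift n (lshift m2 x) end.

Definition lmul_embr n m1 m2 (v : 'I_(n + m2)) : 'I_(n + (m1 + m2)) :=
  match split v with inl k => lshift _ k | inr x => rshift n (rshift m1 x) end.

Definition lgraph_mul n (H1 H2 : lgraph n) : lgraph n :=
  @LGraph n (lnv H1 + lnv H2)
   ([seq (lmul_embl (lnv H2) e.1, lmul_embl (lnv H2) e.2) | e <- ledges H1] ++
    [seq (@lmul_embr n (lnv H1) _ e.1, @lmul_embr n (lnv H1) _ e.2) | e <- ledges H2]).

Definition unlabel n (i0 : 'I_n) (H : lgraph n) : graph1 :=
  @Graph1 (n + lnv H) (lshift (lnv H) i0) (ledges H).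

Lemma ffun_cat_lmul_embl (I : finType) n m1 m2 (psi : {ffun 'I_n -> I})
    (c1 : {ffun 'I_m1 -> I}) (c2 : {ffun 'I_m2 -> I}) v :
  ffun_cat psi (ffun_cat c1 c2) (lmul_embl m2 v) = ffun_cat psi c1 v.
Proof.
rewrite /lmul_embl; case: (split_ordP v) => [k|x] ->;
  by rewrite ?ffun_cat_lshift ?ffun_cat_rshift ?ffun_cat_lshift.
Qed.

Lemma ffun_cat_lmul_embr (I : finType) n m1 m2 (psi : {ffun 'I_n -> I})
    (c1 : {ffun 'I_m1 -> I}) (c2 : {ffun 'I_m2 -> I}) v :
  ffun_cat psi (ffun_cat c1 c2) (@lmul_embr n m1 m2 v) = ffun_cat psi c2 v.
Proof.
rewrite /lmul_embr; case: (split_ordP v) => [k|x] ->;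
  by rewrite ?ffun_cat_lshift ?ffun_cat_rshift.
Qed.

Section LabelledHom.
Variables (K : fieldType) (n : nat) (a : 'I_n -> K) (B : 'M[K]_n).

(* Labelled vertices are placed by [psi] and carry no vertex weight. *)
Definition lhom (H : lgraph n) (psi : {ffun 'I_n -> 'I_n}) : K :=
  \sum_(chi : {ffun 'I_(lnv H) -> 'I_n}) (\prod_u a (chi u)) *
    \prod_(e <- ledges H) B (ffun_cat psi chi e.1) (ffun_cat psi chi e.2).

Lemma lhom_unit psi : lhom (lgraph_unit n) psi = 1.
Proof.
rewrite /lhom /=; under eq_bigr do rewrite big_ord0 big_nil mulr1.
exact: sum_ffun0.
Qed.

Lemma lhom_mul H1 H2 psi : lhom (lgraph_mul H1 H2) psi = lhom H1 psi * lhom H2 psi.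
Proof.
rewrite /lhom /= sum_ffun_cat big_distrl /=; apply: eq_bigr => c1 _.
rewrite mulr_sumr; apply: eq_bigr => c2 _.
rewrite big_split_ord big_cat !big_map /=.
under eq_bigr do rewrite ffun_cat_lshift.
under [\prod_(i < lnv H2) _]eq_bigr do rewrite ffun_cat_rshift.
under [\prod_(j <- ledges H1) _]eq_bigr do rewrite !ffun_cat_lmul_embl.
under [\prod_(j <- ledges H2) _]eq_bigr do rewrite !ffun_cat_lmul_embr.
by rewrite mulrACA.
Qed.

Lemma lhom_edge k l psi : lhom (lgraph_edge k l) psi = B (psi k) (psi l).
Proof.
rewrite /lhom /=; under eq_bigr do rewrite big_ord0 big_seq1 mul1r !ffun_cat_lshift.
exact: sum_ffun0.
Qed.

Lemma lhom_star s psi :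
  lhom (lgraph_star s) psi = \sum_x a x * \prod_(k <- s) B (psi k) x.
Proof.
rewrite /lhom /= (sum_ffun_ins (ord0 : 'I_1)); apply: eq_bigr => x _.
rewrite -[RHS](@sum_ffun0 'I_n); apply: eq_bigr => g _.
rewrite big_ord1 ffun_ins_at big_map; congr (_ * _); apply: eq_bigr => k _.
by rewrite ffun_cat_lshift ffun_cat_rshift ffun_ins_at.
Qed.

Definition label_sum (i : 'I_n) (f : {ffun 'I_n -> 'I_n} -> K) (k : 'I_n) : K :=
  \sum_(psi : {ffun 'I_n -> 'I_n} | psi i == k) (\prod_m a (psi m)) * f psi.

Lemma rhom_unlabel i H k : rhom a B (unlabel i H) k = label_sum i (lhom H) k.
Proof.
rewrite /rhom /= big_mkcond (sum_ffun_cat (p := n) (q := lnv H)) [RHS]big_mkcond /=.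
apply: eq_bigr => psi _; under eq_bigr do rewrite ffun_cat_lshift.
case: eqP => _; last exact: big1.
rewrite /lhom mulr_sumr; apply: eq_bigr => chi _.
rewrite /hweight /= big_split_ord /= -mulrA.
under eq_bigr do rewrite ffun_cat_lshift.
by under [\prod_(i < lnv H) _]eq_bigr do rewrite ffun_cat_rshift.
Qed.

End LabelledHom.

Section AutomorphismRecognition.
Variables (K : fieldType) (n : nat) (a : 'I_n -> K) (B : 'M[K]_n).
Hypotheses (symB : B^T = B) (tfB : twin_free B).

Lemma B_sym i j : B i j = B j i.
Proof. by rewrite -{1}symB mxE. Qed.

Lemma twin_free_eq i j : (forall k, B i k = B j k) -> i = j.
Proof. by move=> E; apply: tfB; apply/rowP => k; rewrite !mxE. Qed.

Definition col_prod (s : seq 'I_n) (y : 'I_n) : K := \prod_(k <- s) B k y.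

Lemma col_prod_cat s t y : col_prod (s ++ t) y = col_prod s y * col_prod t y.
Proof. exact: big_cat. Qed.

Lemma col_prod_separates x y : (forall s, col_prod s y = col_prod s x) -> y = x.
Proof.
move=> E; apply: twin_free_eq => k.
by rewrite B_sym [B x k]B_sym; have := E [:: k]; rewrite /col_prod !big_seq1.
Qed.

Lemma weight_preserved (psi : 'I_n -> 'I_n) :
  injective psi -> (forall k l, B (psi k) (psi l) = B k l) ->
  (forall s, \sum_x a x * \prod_(k <- s) B (psi k) x = \sum_x a x * col_prod s x) ->
  forall y, a (psi y) = a y.
Proof.
move=> psi_inj psiB psi_star y; apply/eqP; rewrite -subr_eq0; apply/eqP.
pose w x := a (psi x) - a x; rewrite -/(w y).
apply: (separating_orth0 col_prod_cat (u := [::])) => [x|x z|s].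
- exact: big_nil.
- exact: col_prod_separates.
rewrite /w; under eq_bigr do rewrite mulrBl.
rewrite sumrB -psi_star [X in _ - X](reindex_inj psi_inj) /=.
by under [X in _ - X]eq_bigr do under eq_bigr do rewrite psiB; rewrite subrr.
Qed.

Lemma lhom_id_aut (psi : {ffun 'I_n -> 'I_n}) :
  (forall H, lhom a B H psi = lhom a B H [ffun k => k]) ->
  [/\ injective psi, forall k, a (psi k) = a k & forall k l, B (psi k) (psi l) = B k l].
Proof.
move=> psi_id.
have psiB k l : B (psi k) (psi l) = B k l.
  by have := psi_id (lgraph_edge k l); rewrite !lhom_edge !ffunE.
have psi_inj : injective psi.
  by move=> k l E; apply: twin_free_eq => j; rewrite -psiB -[RHS]psiB E.
split => //; apply: weight_preserved psi_inj psiB _ => s.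
have := psi_id (lgraph_star s); rewrite !lhom_star => ->.
by under eq_bigr do under eq_bigr do rewrite ffunE.
Qed.

End AutomorphismRecognition.

Section RootSimilarity.
Variables (K : fieldType) (n : nat) (a : 'I_n -> K) (B : 'M[K]_n).
Hypotheses (charK : [pchar K] =i pred0) (a_neq0 : forall i, a i != 0).
Hypotheses (symB : B^T = B) (tfB : twin_free B).

Lemma perm_autG psi (psi_inj : injective psi) :
  (forall k, a (psi k) = a k) -> (forall k l, B (psi k) (psi l) = B k l) ->
  perm psi_inj \in autG a B.
Proof.
move=> psi_a psi_B; rewrite inE; apply/andP; split; apply/forallP => k.
  by rewrite permE psi_a.
by apply/forallP => l; rewrite !permE psi_B.
Qed.

Lemma label_sum_diff i j f :
  \sum_(psi : {ffun 'I_n -> 'I_n})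
     ((psi i == j)%:R / a j - (psi i == i)%:R / a i) * (\prod_m a (psi m)) * f psi
  = label_sum a i f j / a j - label_sum a i f i / a i.
Proof.
under eq_bigr do rewrite !mulrBl.
rewrite sumrB /label_sum !mulr_suml [in RHS]big_mkcond [X in _ = _ - X]big_mkcond /=.
by congr (_ - _); apply: eq_bigr => psi _; case: eqP => _ /=;
  rewrite ?mul0r // div1r -mulrA mulrC.
Qed.

Lemma label_sum_spanned i j f :
  (forall F, nrhom a B F i = nrhom a B F j) -> spanned (lhom a B) f ->
  label_sum a i f j / a j = label_sum a i f i / a i.
Proof.
move=> ij fs; apply/eqP; rewrite -subr_eq0 -label_sum_diff; apply/eqP.
apply: spanned_orth fs => H.
by rewrite label_sum_diff -!rhom_unlabel -!/(nrhom _ _ _ _) ij subrr.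
Qed.

Lemma label_sum_invariant (e : {ffun 'I_n -> 'I_n} -> K) i k :
  (forall psi, e psi != 0 -> forall m, a (psi m) = a m) ->
  label_sum a i e k = (\prod_m a m) * \sum_(psi : {ffun 'I_n -> 'I_n} | psi i == k) e psi.
Proof.
move=> e_a; rewrite mulr_sumr; apply: eq_bigr => psi _.
have [->|/e_a psi_a] := eqVneq (e psi) 0; first by rewrite !mulr0.
by congr (_ * _); apply: eq_bigr => m _; rewrite psi_a.
Qed.

Theorem nrhom_eq_autG i j :
  (forall F, nrhom a B F i = nrhom a B F j) -> exists2 g, g \in autG a B & g i = j.
Proof.
move=> ij.
have [e [es e1 e0]] := spanned_indicator (@lhom_mul K n a B) (lhom_unit a B) [ffun k => k].
have e_aut psi : e psi != 0 -> forall H, lhom a B H psi = lhom a B H [ffun k => k].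
  by move=> e_neq0; apply: NNPP => /e0/eqP; rewrite (negbTE e_neq0).
have e_a psi : e psi != 0 -> forall m, a (psi m) = a m.
  by move=> /e_aut/(lhom_id_aut symB tfB) [].
have Sii : \sum_(psi : {ffun 'I_n -> 'I_n} | psi i == i) e psi != 0.
  rewrite (eq_bigr (fun psi => (e psi == 1)%:R)); last first.
    move=> psi _; have [->|/e_aut/e1 ->] := eqVneq (e psi) 0; last by rewrite eqxx.
    by rewrite eq_sym oner_eq0.
  rewrite -natr_sum (pcharf0P K).1 // -lt0n (bigD1 [ffun k => k]) ?ffunE //=.
  by rewrite e1 ?eqxx.
have Sij : \sum_(psi : {ffun 'I_n -> 'I_n} | psi i == j) e psi != 0.
  have Pa : \prod_m a m != 0 by apply/prodf_neq0 => m _; apply: a_neq0.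
  apply/eqP => Sj0; have := label_sum_spanned ij es.
  rewrite !label_sum_invariant // Sj0 mulr0 mul0r => /esym/eqP.
  by rewrite !mulf_eq0 invr_eq0 (negbTE Pa) (negbTE Sii) (negbTE (a_neq0 i)).
have [psi /andP [/eqP psi_ij e_neq0]] :
    exists psi : {ffun 'I_n -> 'I_n}, (psi i == j) && (e psi != 0).
  apply/existsP; apply: contraR Sij => /existsPn none; apply/eqP/big1 => psi psi_ij.
  by move: (none psi); rewrite psi_ij negbK => /eqP.
have [psi_inj psi_a psi_B] := lhom_id_aut symB tfB (e_aut _ e_neq0).
by exists (perm psi_inj); [apply: perm_autG | rewrite permE].
Qed.

End RootSimilarity.

Lemma sum_weighted_defect (R : comPzRingType) (X : finType) (a f h : X -> R) (S : R) :
  \sum_x (a x * (S * f x - \sum_y a y * f y)) * h x =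
  S * (\sum_x a x * (f x * h x)) - (\sum_y a y * f y) * (\sum_x a x * h x).
Proof. by rewrite !mulr_sumr -sumrB; apply: eq_bigr => x _; ring. Qed.

Section Forward.
Variables (K : fieldType) (n : nat) (a : 'I_n -> K) (B : 'M[K]_n).
Hypotheses (charK : [pchar K] =i pred0) (a_neq0 : forall i, a i != 0).
Hypotheses (symB : B^T = B) (tfB : twin_free B).
Local Notation S := (\sum_i a i).
Hypothesis S_neq0 : S != 0.
Hypothesis hom_glue :
  forall F1 F2, Defs.hom a B F1 * Defs.hom a B F2 = S * Defs.hom a B (glue F1 F2).

Local Notation t := (nrhom a B).
Local Notation spanned_t := (spanned (fun F i => t F i)).

Lemma spanned_mul_sum f h : spanned_t f -> spanned_t h ->
  S * (\sum_x a x * (f x * h x)) = (\sum_x a x * f x) * (\sum_x a x * h x).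
Proof.
have extend_right (f' h' : 'I_n -> K) :
    (forall F, S * (\sum_x a x * (f' x * t F x)) = (\sum_x a x * f' x) * (\sum_x a x * t F x)) ->
    spanned_t h' -> S * (\sum_x a x * (f' x * h' x)) = (\sum_x a x * f' x) * (\sum_x a x * h' x).
  move=> f't h's; apply/eqP; rewrite -subr_eq0 -sum_weighted_defect; apply/eqP.
  by apply: spanned_orth h's => F; rewrite sum_weighted_defect f't subrr.
move=> fs; apply: (extend_right) => F2; rewrite [RHS]mulrC.
under [X in S * X]eq_bigr => x _ do rewrite (mulrC (f x)).
apply: (extend_right) fs => F1; rewrite -!hom_nrhom // hom_glue; congr (_ * _).
by rewrite hom_nrhom //; apply: eq_bigr => x _; rewrite nrhom_glue.
Qed.

Lemma class_indicator i0 : exists f, [/\ spanned_t f,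
     forall y, (forall F, t F y = t F i0) -> f y = 1,
     forall y, ~ (forall F, t F y = t F i0) -> f y = 0 &
     \sum_y a y * f y = S].
Proof.
have [f [fs f1 f0]] := spanned_indicator (nrhom_glue B a_neq0) (nrhom_K1 B a_neq0) i0.
exists f; split => //.
have f01 y : f y = 0 \/ (f y = 1 /\ a y = a i0).
  have [cy|/f0] := classic (forall F, t F y = t F i0); last by left.
  right; split; first exact: f1.
  have [g] := nrhom_eq_autG charK a_neq0 symB tfB (fun F => esym (cy F)).
  by rewrite inE => /andP [/forallP /(_ i0) /eqP <- _] ->.
have Sf_neq0 : \sum_y a y * f y != 0.
  rewrite (eq_bigr (fun y => a i0 * (f y == 1)%:R)); last first.
    by move=> y _; case: (f01 y) => [->|[-> ->]]; rewrite ?eqxx // eq_sym oner_eq0 !mulr0.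
  rewrite -mulr_sumr -natr_sum mulf_neq0 // (pcharf0P K).1 // -lt0n (bigD1 i0) //=.
  by rewrite f1 ?eqxx.
have := spanned_mul_sum fs fs.
have -> : \sum_x a x * (f x * f x) = \sum_x a x * f x.
  by apply: eq_bigr => x _; case: (f01 x) => [->|[-> _]]; rewrite ?mulr0 ?mulr1.
by move/(mulIf Sf_neq0)/esym.
Qed.

Theorem transitive_of_hom_glue : transitive_on_all (autG a B).
Proof.
move=> i j; apply: (nrhom_eq_autG charK a_neq0 symB tfB); apply: NNPP => ij.
have [fi [fis fi1 fi0 Sfi]] := class_indicator i.
have [fj [fjs fj1 fj0 Sfj]] := class_indicator j.
have fifj0 : \sum_x a x * (fi x * fj x) = 0.
  apply: big1 => y _.
  have [yi|/fi0 ->] := classic (forall F, t F y = t F i); last by rewrite mul0r mulr0.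
  have [yj|/fj0 ->] := classic (forall F, t F y = t F j); last by rewrite !mulr0.
  by case: ij => F; rewrite -yi yj.
move/eqP: S_neq0; apply; apply/eqP.
have := spanned_mul_sum fis fjs; rewrite Sfi Sfj fifj0 mulr0 => /esym/eqP.
by rewrite mulf_eq0 orbb.
Qed.

End Forward.

Section Backward.
Variables (K : fieldType) (n : nat) (a : 'I_n -> K) (B : 'M[K]_n).

Lemma rhom_autG F g i : g \in autG a B -> rhom a B F (g i) = rhom a B F i.
Proof.
rewrite inE => /andP [/forallP g_a /forallP g_B].
pose gphi (phi : {ffun 'I_(nv F) -> 'I_n}) := [ffun v => g (phi v)].
have gphi_inj : injective gphi.
  by move=> p q /ffunP E; apply/ffunP => v; apply: (@perm_inj _ g); have := E v; rewrite !ffunE.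
rewrite /rhom (reindex_inj gphi_inj) /=.
apply: eq_big => phi; first by rewrite ffunE (inj_eq (@perm_inj _ g)).
move=> _; rewrite /hweight; congr (_ * _).
  by apply: eq_bigr => v _; rewrite ffunE; apply/eqP.
by apply: eq_bigr => e _; rewrite !ffunE; have /forallP/(_ (phi e.2))/eqP := g_B (phi e.1).
Qed.

Theorem hom_glue_of_transitive (i0 : 'I_n) F1 F2 : transitive_on_all (autG a B) ->
  Defs.hom a B F1 * Defs.hom a B F2 = (\sum_i a i) * Defs.hom a B (glue F1 F2).
Proof.
move=> tr.
have rhom_const F : \sum_i rhom a B F i = rhom a B F i0 *+ n.
  rewrite -[X in _ *+ X]card_ord -sumr_const; apply: eq_bigr => i _.
  by have [g g_aut <-] := tr i0 i; rewrite rhom_autG.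
have a_const : \sum_i a i = a i0 *+ n.
  rewrite -[X in _ *+ X]card_ord -sumr_const; apply: eq_bigr => i _.
  by have [g] := tr i0 i; rewrite inE => /andP [/forallP /(_ i0) /eqP ? _] <-.
rewrite !hom_rhom !rhom_const a_const.
by rewrite mulrnAl mulrnAr [in RHS]mulrnAl [in RHS]mulrnAr rhom_glue.
Qed.

End Backward.

Theorem lemma2p2 (K : fieldType) (n : nat) (a : 'I_n -> K) (B : 'M[K]_n) :
  [pchar K] =i pred0 ->
  (0 < n)%N ->
  (forall i, a i != 0) ->
  B^T = B ->
  twin_free B ->
  \sum_i a i != 0 ->
  (forall F1 F2 : graph1,
      hdens a B F1 * hdens a B F2 = hdens a B (glue F1 F2))
  <-> transitive_on_all (autG a B).
Proof.
move=> charK n_gt0 a_neq0 symB tfB S_neq0.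
have hdensE F1 F2 := hdens_glueE B F1 F2 S_neq0.
split => [hdens_glue | tr F1 F2].
  by apply: transitive_of_hom_glue => // F1 F2; apply/hdensE.
by apply/hdensE; apply: hom_glue_of_transitive (Ordinal n_gt0) _ _ tr.
Qed.
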